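(* For every $n \geq 2$ and every $i \in \{1,\ldots,n\}$, if the set of arrangements in $\{d_{n1}\}$ with first entry $i$ is nonempty, then it has exactly $Der_{n-2}$ elements.
   Context: A linear arrangement of $\{1,\ldots,n\}$ is a sequence $a_1\cdots a_n$ in which each of $1,\ldots,n$ appears exactly once. It contains the pattern $ij$ if $a_t=i$ and $a_{t+1}=j$ for some $t$; otherwise it avoids it. $\{d_{n1}\}$ is the set of linear arrangements of $\{1,\ldots,n\}$ that avoid all of the patterns $12, 23, \ldots, (n-1)n$ and contain the pattern $n1$. $Der_m$ is the number of permutations of $\{1,\ldots,m\}$ with no fixed point ($Der_0=1$). *)

From mathcomp Require Import all_boot all_fingroup.
Set Implicit Arguments. Unset Strict Implicit. Unset Printing Implicit Defensive.

Definition is_arrangement (n : nat) (s : seq nat) : bool :=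
  perm_eq s (iota 1 n).

Definition contains_pat (s : seq nat) (i j : nat) : bool :=
  (i, j) \in zip s (behead s).

Definition in_dn1 (n : nat) (s : seq nat) : bool :=
  [&& is_arrangement n s,
      all (fun k => ~~ contains_pat s k k.+1) (iota 1 n.-1)
    & contains_pat s n 1].

Definition dn1_first (n i : nat) : seq nat -> bool :=
  fun s => in_dn1 n s && (head 0 s == i).

Definition Der (m : nat) : nat :=
  #|[set s : {perm 'I_m} | [forall x, s x != x]]|.

From mathcomp Require Import all_boot all_fingroup zify.
Set Implicit Arguments. Unset Strict Implicit. Unset Printing Implicit Defensive.

(* Gluing the forced factor n1 into the single letter n, and dropping the constraint
   "(i-1) i" that cannot occur in front of the first letter i, identifies {d_n1} with
   first entry i (which forces i <> 1) with the arrangements of {2,...,n} starting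
   with i that avoid the n-2 adjacencies of the path i, i+1, ..., n, 2, 3, ..., i-1.
   More generally, let F(k, e) count the arrangements of k+1 letters with a fixed
   first letter avoiding e adjacencies that form vertex-disjoint paths not entering
   that letter.  An arrangement avoiding all but the last adjacency u v either avoids
   it too, or contains it, and gluing u v then leaves an instance with one letter
   less, so F(k, e+1) = F(k, e) - F(k-1, e), with F(k, 0) = k!.  Splitting on whether
   a point is fixed shows that the permutations of k points without fixed points in a
   given e-set obey the same recurrence; hence F(n-2, n-2) = Der_(n-2). *)

Lemma uniq_cat_notin (T : eqType) (a b : seq T) x :
  uniq (a ++ b) -> x \in b -> x \notin a.
Proof. by rewrite cat_uniq => /and3P [_ /hasPn notin_a _] /notin_a. Qed.

Lemma perm_rem2 (T : eqType) (x : T) (s1 s2 : seq T) : x \in s1 -> x \in s2 ->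
  perm_eq (rem x s1) (rem x s2) = perm_eq s1 s2.
Proof.
move=> x1 x2; rewrite -(perm_cons x) (permPl (perm_to_rem x1)).
by rewrite (permPr (perm_to_rem x2)).
Qed.

Lemma size_bij_in (T U : eqType) (s : seq T) (t : seq U) (f : T -> U) (g : U -> T) :
  uniq s -> uniq t -> {in s, forall x, f x \in t} -> {in t, forall y, g y \in s} ->
  {in s, cancel f g} -> {in t, cancel g f} -> size s = size t.
Proof.
move=> Us Ut ft gs fK gK; rewrite -(size_map f); apply/perm_size/uniq_perm => //.
  by rewrite map_inj_in_uniq //; apply: can_in_inj fK.
move=> y; apply/mapP/idP => [[x xs ->]|yt]; first exact: ft.
by exists (g y); rewrite ?gs ?gK.
Qed.

Lemma contains_pat_cons x t y z :
  contains_pat (x :: t) y z =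
    (if t is a :: _ then (y, z) == (x, a) else false) || contains_pat t y z.
Proof. by case: t => [|a t] //=; rewrite /contains_pat /= in_cons. Qed.

Lemma contains_pat_mid a b u v : contains_pat (a ++ u :: v :: b) u v.
Proof. by elim: a => [|x a IH]; rewrite /= contains_pat_cons ?eqxx ?IH ?orbT. Qed.

Lemma contains_patP w u v :
  reflect (exists a b, w = a ++ u :: v :: b) (contains_pat w u v).
Proof.
apply: (iffP idP) => [|[a [b ->]]]; last exact: contains_pat_mid.
elim: w => [|x t IH] //; rewrite contains_pat_cons.
case: t IH => [|a t] IH //.
case/orP => [/eqP [-> ->]|/IH [a' [b ->]]]; first by exists [::], t.
by exists (x :: a'), b.
Qed.

Lemma contains_pat_to_head x t y : x \notin t -> contains_pat (x :: t) y x = false.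
Proof.
apply: contraNF => /contains_patP [[|c a] [b /= [-> et]]]; rewrite et ?mem_cat;
by rewrite !in_cons eqxx ?orbT.
Qed.

Lemma contains_pat_memL w y z : contains_pat w y z -> y \in w.
Proof. by case/contains_patP => a [b ->]; rewrite mem_cat in_cons eqxx orbT. Qed.

Definition avoids (w : seq nat) (E : seq (nat * nat)) : bool :=
  all (fun p => ~~ contains_pat w p.1 p.2) E.

(* Contracting the adjacency u v into the letter u: constraints leaving v now leave u. *)
Definition glue (u v : nat) (p : nat * nat) : nat * nat :=
  if p.1 == v then (u, p.2) else p.

Section Glue.
Variables (a b : seq nat) (u v : nat).

Lemma contains_pat_glue_other x y : x != u -> x != v ->
  contains_pat (a ++ u :: b) x y = contains_pat (a ++ u :: v :: b) x y.
Proof.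
move=> xu xv; elim: a => [|c a' IH].
  by rewrite /= !contains_pat_cons; case: b => [|d b'];
    rewrite ?xpair_eqE ?(negbTE xu) ?(negbTE xv).
by rewrite /= !(contains_pat_cons c) IH; case: a' {IH}.
Qed.

Lemma contains_pat_glue_succ y : uniq (a ++ u :: v :: b) ->
  contains_pat (a ++ u :: b) u y = contains_pat (a ++ u :: v :: b) v y.
Proof.
elim: a => [|c a' IH].
  rewrite /= !in_cons negb_or => /and3P [/andP [uv ub] vb _].
  rewrite !contains_pat_cons xpair_eqE eq_sym (negbTE uv) /=.
  case: b ub vb => [|d b'] ub vb //=.
  have notpat x t : x \notin t -> contains_pat t x y = false.
    by apply: contraNF; apply: contains_pat_memL.
  by rewrite !xpair_eqE !eqxx /= !notpat.
rewrite cat_cons cons_uniq mem_cat !in_cons !negb_or.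
move=> /andP [/andP [_ /andP [cu /andP [cv _]]] U].
rewrite !(contains_pat_cons c) (IH U).
by case: a' {IH U} => [|d a'] /=;
  rewrite !xpair_eqE (eq_sym u) (eq_sym v) (negbTE cu) (negbTE cv).
Qed.

Lemma avoids_glue E : uniq (a ++ u :: v :: b) ->
  {in E, forall p, (p.1 != u) && (p.2 != v)} ->
  avoids (a ++ u :: b) (map (glue u v) E) = avoids (a ++ u :: v :: b) E.
Proof.
move=> U HE; rewrite /avoids all_map; apply: eq_in_all => p /HE /andP [pu pv].
rewrite /glue /=; case: eqP => [->|/eqP ne] /=; first by rewrite contains_pat_glue_succ.
by rewrite contains_pat_glue_other.
Qed.

Lemma head_glue : head 0 (a ++ u :: v :: b) = head 0 (a ++ u :: b).
Proof. by case: a. Qed.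

Lemma rem_glue : v \notin a -> u != v -> rem v (a ++ u :: v :: b) = a ++ u :: b.
Proof.
move=> va uv; elim: a va => [|x a' IH] /=; first by rewrite (negbTE uv) eqxx.
by rewrite in_cons negb_or eq_sym => /andP [/negbTE -> /IH ->].
Qed.

End Glue.

Fixpoint insert_after (u v : nat) (w : seq nat) : seq nat :=
  if w is x :: t then if x == u then u :: v :: t else x :: insert_after u v t
  else [::].

Lemma insert_after_mid a b u v :
  u \notin a -> insert_after u v (a ++ u :: b) = a ++ u :: v :: b.
Proof.
elim: a => [|x a IH] /=; first by rewrite eqxx.
by rewrite in_cons negb_or eq_sym => /andP [/negbTE -> /IH ->].
Qed.

Definition n_avoid (X : seq nat) (s : nat) (E : seq (nat * nat)) : nat :=
  count (fun w => (head 0 w == s) && avoids w E) (permutations X).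

Definition n_avoid_pat (X : seq nat) (s u v : nat) (E : seq (nat * nat)) : nat :=
  count (fun w => [&& head 0 w == s, contains_pat w u v & avoids w E])
    (permutations X).

Lemma n_avoid_pat_glue X s u v E :
  uniq X -> u \in X -> v \in X -> u != v -> v != s ->
  {in E, forall p, (p.1 != u) && (p.2 != v)} ->
  n_avoid_pat X s u v E = n_avoid (rem v X) s (map (glue u v) E).
Proof.
move=> UX uX vX uv vs HE; rewrite /n_avoid_pat /n_avoid -!size_filter.
have glued w : perm_eq w X -> contains_pat w u v ->
    exists a b, [/\ w = a ++ u :: v :: b, uniq w, u \notin a & v \notin a].
  move=> wX /contains_patP [a [b ew]]; have Uw : uniq w by rewrite (perm_uniq wX).
  have notin_a x : x \in u :: v :: b -> x \notin a by apply: uniq_cat_notin; rewrite -ew.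
  by exists a, b; rewrite !notin_a // !inE eqxx ?orbT.
have split_u w : perm_eq w (rem v X) ->
    exists a b, [/\ w = a ++ u :: b, u \notin a & v \notin a].
  move=> wX; have Uw : uniq w by rewrite (perm_uniq wX) rem_uniq.
  have vw : v \notin w by rewrite (perm_mem wX) mem_rem_uniqF.
  have uw : u \in w by rewrite (perm_mem wX) mem_rem_uniq // inE uv.
  move: Uw vw; case/splitPr: uw => a b Uw; rewrite mem_cat negb_or => /andP [va _].
  by exists a, b; rewrite (uniq_cat_notin Uw) ?mem_head.
apply: (size_bij_in (f := rem v) (g := insert_after u v));
  rewrite ?filter_uniq ?permutations_uniq //.
- move=> w; rewrite !mem_filter !mem_permutations => /andP [/and3P [sw cw aw] wX].
  have [a [b [ew Uw ua va]]] := glued w wX cw.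
  have vw : v \in w by rewrite ew mem_cat !in_cons eqxx !orbT.
  rewrite perm_rem2 // wX andbT ew rem_glue // -(head_glue a b u v) avoids_glue -?ew //.
  by rewrite sw aw.
- move=> w; rewrite mem_filter mem_permutations => /andP [/andP [sw aw] wX].
  have [a [b [ew ua va]]] := split_u w wX.
  have wX' : perm_eq (a ++ u :: v :: b) X.
    by rewrite -(perm_rem2 (x := v)) ?rem_glue -?ew // mem_cat !in_cons eqxx !orbT.
  have Uw : uniq (a ++ u :: v :: b) by rewrite (perm_uniq wX').
  rewrite ew insert_after_mid // mem_filter mem_permutations wX' contains_pat_mid.
  by rewrite head_glue -avoids_glue // -ew sw aw.
- move=> w; rewrite mem_filter mem_permutations => /andP [/and3P [_ cw _] wX].
  have [a [b [-> _ ua va]]] := glued w wX cw.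
  by rewrite rem_glue // insert_after_mid.
- move=> w; rewrite mem_filter mem_permutations => /andP [_ /split_u [a [b [-> ua va]]]].
  by rewrite insert_after_mid // rem_glue.
Qed.

Lemma n_avoid_cons X s u v E :
  n_avoid X s ((u, v) :: E) + n_avoid_pat X s u v E = n_avoid X s E.
Proof.
rewrite /n_avoid /n_avoid_pat -[RHS]size_filter.
rewrite -(count_predC (fun w => contains_pat w u v)) !count_filter addnC.
by congr (_ + _); apply: eq_count => w /=; rewrite /avoids /=;
  case: (head 0 w == s); case: contains_pat; rewrite ?andbF.
Qed.

Lemma n_avoid_nil X s : uniq X -> s \in X -> n_avoid X s [::] = (size X).-1`!.
Proof.
move=> UX sX; rewrite /n_avoid -size_filter -(size_rem sX).
rewrite -size_permutations ?rem_uniq // -(size_map (cons s)).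
apply/perm_size/uniq_perm; rewrite ?filter_uniq ?permutations_uniq //.
  by rewrite map_inj_uniq ?permutations_uniq // => t1 t2 [].
move=> w; rewrite mem_filter mem_permutations andbT.
apply/andP/mapP => [[/eqP hw wX]|[t]]; last first.
  rewrite mem_permutations => tX ->; split=> //.
  by rewrite (permPr (perm_to_rem sX)) perm_cons.
case: w hw wX => [|x t] /= hw wX; first by move: sX; rewrite -(perm_mem wX).
exists t; rewrite ?hw // mem_permutations -(perm_cons s).
by rewrite -(permPr (perm_to_rem sX)) -hw.
Qed.

(* The subtraction never truncates: pder k e counts the permutations of k points without
   fixed points in a given e-set (card_derange_on). *)
Fixpoint pder (k e : nat) : nat :=
  if e is e'.+1 then pder k e' - pder k.-1 e' else k`!.

(* Distinct sources, distinct targets and r increasing along every pair: E is a union of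
   vertex-disjoint paths in X, none of which enters s. *)
Definition linear_forest (r : nat -> nat) (X : seq nat) (s : nat)
    (E : seq (nat * nat)) : bool :=
  [&& all (fun p => [&& p.1 \in X, p.2 \in X, r p.1 < r p.2 & p.2 != s]) E,
      uniq (unzip1 E) & uniq (unzip2 E)].

Lemma linear_forest_glue r X s u v E : uniq X ->
  linear_forest r X s ((u, v) :: E) -> linear_forest r (rem v X) s (map (glue u v) E).
Proof.
move=> UX /and3P [/= /andP [/and4P [uX vX ruv _] /allP HE] /andP [uE1 UE1]].
move=> /andP [vE2 UE2].
have uv : u != v by apply: contraTneq ruv => ->; rewrite ltnn.
have pv p : p \in E -> p.2 != v by move=> pE; apply: contraNneq vE2 => <-; apply: map_f.
apply/and3P; split.
- apply/allP => _ /mapP [p pE ->]; have /and4P [p1X p2X rp ps] := HE p pE.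
  rewrite /glue; case: eqP => [p1v|/eqP p1v];
    rewrite /= !mem_rem_uniq // !inE pv // p2X ps !andbT; last by rewrite p1v p1X.
  by rewrite uX uv (ltn_trans ruv) -?p1v.
- rewrite /unzip1 -map_comp (eq_map (g := fun p => if p.1 == v then u else p.1)).
    rewrite (map_comp (fun x => if x == v then u else x)) map_inj_in_uniq //.
    have nu z : z \in unzip1 E -> z != u by move=> zE; apply: contraNneq uE1 => <-.
    move=> x y /nu xu /nu yu; case: eqP => [->|_]; case: eqP => [->|_] //.
    + by move=> uy; rewrite uy eqxx in yu.
    + by move=> xu'; rewrite xu' eqxx in xu.
  by move=> p /=; rewrite /glue; case: eqP.
- by rewrite /unzip2 -map_comp (eq_map (g := snd)) // => p /=; rewrite /glue; case: eqP.
Qed.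

Lemma n_avoid_forest r X s E : uniq X -> s \in X -> linear_forest r X s E ->
  n_avoid X s E = pder (size X).-1 (size E).
Proof.
move eE : (size E) => e; elim: e X E eE => [|e IH] X [|[u v] E] //= eE UX sX F.
  exact: n_avoid_nil.
case: eE => eE.
have /and3P [/= /andP [/and4P [uX vX ruv vs] _] /andP [uE1 _] /andP [vE2 _]] := F.
have uv : u != v by apply: contraTneq ruv => ->; rewrite ltnn.
have HE : {in E, forall p, (p.1 != u) && (p.2 != v)}.
  move=> p pE; apply/andP; split.
    by apply: contraNneq uE1 => <-; apply: map_f.
  by apply: contraNneq vE2 => <-; apply: map_f.
have FE : linear_forest r X s E.
  by case/and3P: F => /andP [_ ?] /andP [_ ?] /andP [_ ?]; apply/and3P.
have -> : n_avoid X s ((u, v) :: E) = n_avoid X s E - n_avoid_pat X s u v E.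
  by rewrite -(n_avoid_cons X s u v E) addnK.
rewrite n_avoid_pat_glue // !IH ?size_map ?rem_uniq ?linear_forest_glue ?size_rem //.
by rewrite mem_rem_uniq // inE eq_sym vs.
Qed.

Definition derange_on k (F : {set 'I_k}) : {set {perm 'I_k}} :=
  [set s : {perm 'I_k} | [forall x in F, s x != x]].

Lemma lift_perm_inj k (i j : 'I_k.+1) : injective (lift_perm i j).
Proof.
move=> s t est; apply/permP => y; apply: (@lift_inj _ j).
by rewrite -!(lift_perm_lift i) est.
Qed.

Lemma lift_perm_fix k (x : 'I_k.+1) :
  [set s : {perm 'I_k.+1} | s x == x] = lift_perm x x @: [set: {perm 'I_k}].
Proof.
apply/esym/eqP; rewrite eqEcard; apply/andP; split.
  by apply/subsetP => _ /imsetP [s _ ->]; rewrite inE lift_perm_id.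
rewrite card_imset; last exact: lift_perm_inj.
have cardC1x : #|[set~ x]| = k by rewrite cardsC1 card_ord.
rewrite cardsT card_Sn; apply: (@leq_trans #|perm_on [set~ x]|).
  apply: subset_leq_card; apply/subsetP => s; rewrite inE => /eqP sx.
  by apply/subsetP => y; rewrite !inE; apply: contraNneq => ->; rewrite sx.
by rewrite card_perm cardC1x.
Qed.

Lemma derange_on_fix k (x : 'I_k.+1) (F : {set 'I_k.+1}) : x \notin F ->
  derange_on F :&: [set s : {perm _} | s x == x] =
  lift_perm x x @: derange_on (lift x @^-1: F).
Proof.
move=> xF; apply/setP => s; rewrite inE lift_perm_fix.
apply/andP/imsetP => [[sF /imsetP [t _ st]]|[t tF ->]].
  exists t => //; rewrite inE; apply/forallP => y; apply/implyP; rewrite inE => yF.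
  move: sF; rewrite st inE => /forallP /(_ (lift x y)); rewrite yF lift_perm_lift /=.
  by apply: contra => /eqP ->.
split; last by apply/imsetP; exists t.
rewrite inE; apply/forallP => y; apply/implyP => yF.
have xy : x != y by apply: contraNneq xF => ->.
have [z yz _] := unlift_some xy; move: yF; rewrite yz lift_perm_lift (inj_eq lift_inj).
by move: tF; rewrite inE => /forallP /(_ z); rewrite inE => /implyP.
Qed.

Lemma card_derange_on k (F : {set 'I_k}) : #|derange_on F| = pder k #|F|.
Proof.
move eF : #|F| => e; elim: e k F eF => [|e IH] k F eF.
  have -> : F = set0 by apply/eqP; rewrite -cards_eq0 eF.
  rewrite /= -card_Sn; apply: eq_card => s.
  by rewrite !inE; apply/forallP => x; rewrite inE.
have [x xF] : exists x, x \in F by apply/set0Pn; rewrite -card_gt0 eF.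
case: k x F xF eF IH => [[] //|k] x F xF eF IH.
have eFx : #|F :\ x| = e by move: eF; rewrite (cardsD1 x) xF => -[].
have eFlift : #|lift x @^-1: (F :\ x)| = e.
  rewrite -eFx -(card_imset _ (@lift_inj _ x)); apply: eq_card => y.
  apply/imsetP/idP => [[z] | yF]; first by rewrite inE => zF ->.
  have xy : x != y by move: yF; rewrite in_setD1 eq_sym => /andP [].
  by have [z yz _] := unlift_some xy; exists z; rewrite // inE -yz.
have -> : derange_on F = derange_on (F :\ x) :\: [set s : {perm _} | s x == x].
  apply/setP => s; rewrite !inE; apply/forallP/andP => [sF | [sx /forallP sF] y].
    split; first by have /implyP := sF x; apply.
    by apply/forallP => y; apply/implyP; rewrite inE => /andP [_ /(implyP (sF y))].
  apply/implyP => yF; case: (eqVneq y x) => [-> //|yx].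
  by have /implyP := sF y; apply; rewrite !inE yx.
set B := [set s : {perm _} | s x == x].
rewrite -(addKn #|derange_on (F :\ x) :&: B| #|_ :\: _|) cardsID.
by rewrite derange_on_fix ?setD11 // card_imset ?IH //; apply: lift_perm_inj.
Qed.

Lemma Der_pder m : Der m = pder m m.
Proof.
rewrite -{3}(card_ord m) -cardsT -card_derange_on.
by apply: eq_card => s; rewrite !inE; apply: eq_forallb => y; rewrite inE.
Qed.

Definition succ_pairs (n : nat) : seq (nat * nat) := [seq (k, k.+1) | k <- iota 1 n.-1].

Lemma count_dn1_first_pat n i :
  count (dn1_first n i) (permutations (iota 1 n)) =
  n_avoid_pat (iota 1 n) i n 1 (succ_pairs n).
Proof.
apply: eq_in_count => w; rewrite mem_permutations => wX.
rewrite /dn1_first /in_dn1 /is_arrangement wX /avoids all_map /=.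
by case: (head 0 w == i); case: contains_pat; rewrite ?andbT ?andbF.
Qed.

Lemma in_dn1_head n w : in_dn1 n w -> head 0 w != 1.
Proof.
case/and3P => wX _ wn1; have : uniq w by rewrite (perm_uniq wX) iota_uniq.
case: w {wX} wn1 => [|x t] //= wn1 /andP [xt _].
by apply: contraTneq wn1 => x1; rewrite -x1 contains_pat_to_head.
Qed.

Lemma n_avoid_drop_head X s E :
  uniq X -> n_avoid X s E = n_avoid X s [seq p <- E | p.2 != s].
Proof.
move=> UX; apply: eq_in_count => w; rewrite mem_permutations => wX.
have Uw : uniq w by rewrite (perm_uniq wX).
case: eqP => //= hw; rewrite /avoids all_filter; apply: eq_all => p.
case: (eqVneq p.2 s) => [p2s|p2s]; rewrite /= p2s ?eqxx //=.
by case: w Uw hw {wX} => [|x t] //= /andP [xt _] <-; rewrite contains_pat_to_head.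
Qed.

Definition glued_pairs (n i : nat) : seq (nat * nat) :=
  [seq (if k == 1 then n else k, k.+1) | k <- iota 1 n.-1 & k.+1 != i].

Lemma glued_pairsE n i :
  [seq p <- map (glue n 1) (succ_pairs n) | p.2 != i] = glued_pairs n i.
Proof.
rewrite /succ_pairs -map_comp filter_map /glued_pairs.
rewrite (@eq_filter _ _ (fun k => k.+1 != i)); last first.
  by move=> k; rewrite /preim /= /glue /=; case: (k == 1).
by apply: eq_map => k; rewrite /= /glue; case: eqP.
Qed.

Lemma size_glued_pairs n i : 2 <= i <= n -> size (glued_pairs n i) = n - 2.
Proof.
move=> i2n; rewrite size_map size_filter.
have := count_predC (fun k => k.+1 == i) (iota 1 n.-1).
rewrite size_iota -(count_map succn (pred1 i)) (_ : map succn _ = iota 2 n.-1).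
  rewrite count_uniq_mem ?iota_uniq // mem_iota (_ : 2 <= i < 2 + n.-1) /=; last by lia.
  by rewrite -[count (fun k => _ != i) _]/(count (predC (fun k => k.+1 == i)) _); lia.
by rewrite (iotaDl 1 1).
Qed.

(* The rank increases along the path i, i+1, ..., n, 2, 3, ..., i-1. *)
Lemma linear_forest_glued_pairs n i : 2 <= i <= n ->
  linear_forest (fun x => if i <= x then x - i else x + n) (iota 2 n.-1) i
    (glued_pairs n i).
Proof.
move=> /andP [i2 iln]; apply/and3P; split.
- apply/allP => p /mapP [k]; rewrite mem_filter mem_iota => /andP [ki /andP [k1 kn]] ->.
  rewrite /= !mem_iota ki andbT.
  by case: (eqVneq k 1) => [k1'|k_ne1] /=; case: ifP; case: ifP; lia.
- rewrite /unzip1 -map_comp map_inj_in_uniq ?filter_uniq ?iota_uniq // => x y.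
  rewrite !mem_filter !mem_iota /= => /andP [_ hx] /andP [_ hy].
  by case: (eqVneq x 1); case: (eqVneq y 1); lia.
- rewrite /unzip2 -map_comp map_inj_uniq ?filter_uniq ?iota_uniq //.
  exact: succn_inj.
Qed.

Lemma count_dn1_first n i : 2 <= i <= n ->
  count (dn1_first n i) (permutations (iota 1 n)) =
  n_avoid (iota 2 n.-1) i (glued_pairs n i).
Proof.
move=> /andP [i2 iln]; have n2 : 1 < n := leq_trans i2 iln.
have memX x : (x \in iota 1 n) = (1 <= x <= n) by rewrite mem_iota add1n ltnS.
have succ_pairs_glue : {in succ_pairs n, forall p, (p.1 != n) && (p.2 != 1)}.
  move=> p /mapP [k]; rewrite mem_iota => /andP [k1 kn] -> /=.
  by apply/andP; split; apply/eqP; lia.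
rewrite count_dn1_first_pat n_avoid_pat_glue ?iota_uniq ?memX ?(ltnW n2) ?leqnn //;
  last 2 first.
- by rewrite neq_ltn n2 orbT.
- by rewrite neq_ltn i2.
rewrite (_ : rem 1 (iota 1 n) = iota 2 n.-1); last by case: (n) n2 => //= m; rewrite eqxx.
by rewrite n_avoid_drop_head ?iota_uniq // glued_pairsE.
Qed.

Theorem lemma4p8 (n i : nat) :
  2 <= n -> 1 <= i <= n ->
  [seq s <- permutations (iota 1 n) | dn1_first n i s] != [::] ->
  size [seq s <- permutations (iota 1 n) | dn1_first n i s] = Der (n - 2).
Proof.
move=> _ /andP [i1 iln]; rewrite -has_filter.
move=> /hasP [w _ /andP [/in_dn1_head w1 /eqP wi]].
have i2n : 2 <= i <= n by rewrite iln andbT ltn_neqAle i1 andbT eq_sym -wi.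
have iX : i \in iota 2 n.-1 by rewrite mem_iota; lia.
rewrite size_filter count_dn1_first //.
rewrite (n_avoid_forest (iota_uniq 2 n.-1) iX (linear_forest_glued_pairs i2n)).
by rewrite size_iota size_glued_pairs // Der_pder subn2.
Qed.
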